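(* Let $A$ be an affine (finitely generated commutative) Poisson $\mathbb{C}$-algebra and let $P$ be a Poisson prime ideal of $A$ such that $A/P$ has Krull dimension $d\leq 1$. Then $P$ is residually null.
   Context: A Poisson prime ideal is a prime ideal $P$ with $\{a,P\}\subseteq P$ for all $a\in A$. A Poisson ideal $I$ is residually null if the induced Poisson bracket on $A/I$ is zero. *)

(* The base field C is the field of complex numbers,
   realised as complex R = R[i] for an arbitrary R : realType. *)
From HB Require Import structures.
From mathcomp Require Import all_boot all_order all_algebra.
From mathcomp Require Import reals.
From mathcomp Require Export complex.
Set Implicit Arguments. Unset Strict Implicit. Unset Printing Implicit Defensive.
Import GRing.Theory.
Local Open Scope ring_scope.

Section PoissonDefs.
Variables (K : comNzRingType) (A : comAlgType K).

Definition is_poisson_bracket (br : A -> A -> A) : Prop :=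
  [/\ (forall (k : K) (a b c : A), br (k *: a + b) c = k *: br a c + br b c),
      (forall (k : K) (a b c : A), br a (k *: b + c) = k *: br a b + br a c),
      (forall a : A, br a a = 0),
      (forall a b c : A, br a (br b c) + br b (br c a) + br c (br a b) = 0)
    & (forall a b c : A, br a (b * c) = br a b * c + b * br a c)].

(* Affine: finitely generated as a K-algebra, i.e. some finite family of
   elements lies in no proper K-subalgebra. *)
Definition subalgebra (S : A -> Prop) : Prop :=
  [/\ S 1, (forall a b, S a -> S b -> S (a + b)),
      (forall a b, S a -> S b -> S (a * b)) & (forall (k : K) a, S a -> S (k *: a))].

Definition finitely_generated : Prop :=
  exists s : seq A, forall S : A -> Prop,
    subalgebra S -> (forall x, x \in s -> S x) -> forall a, S a.

Definition ideal (I : A -> Prop) : Prop :=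
  [/\ I 0, (forall a b, I a -> I b -> I (a + b)) & (forall a b, I b -> I (a * b))].

Definition prime_ideal (I : A -> Prop) : Prop :=
  [/\ ideal I, ~ I 1 & (forall a b, I (a * b) -> I a \/ I b)].

Definition poisson_ideal (br : A -> A -> A) (I : A -> Prop) : Prop :=
  ideal I /\ forall a b, I b -> I (br a b).

Definition poisson_prime (br : A -> A -> A) (I : A -> Prop) : Prop :=
  prime_ideal I /\ poisson_ideal br I.

(* The induced bracket on A/I is zero: {a,b} lies in I for all a, b. *)
Definition residually_null (br : A -> A -> A) (I : A -> Prop) : Prop :=
  forall a b, I (br a b).

Definition strict_subset (I J : A -> Prop) : Prop :=
  (forall x, I x -> J x) /\ exists x, J x /\ ~ I x.

(* Krull dimension of A/P is at most d: via the correspondence between prime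
   ideals of A/P and prime ideals of A containing P, every strictly
   increasing chain Q 0 < Q 1 < ... < Q n of primes of A/P has n <= d. *)
Definition quot_krull_dim_le (P : A -> Prop) (d : nat) : Prop :=
  forall (n : nat) (Q : nat -> A -> Prop),
    (forall i, (i <= n)%N -> prime_ideal (Q i) /\ forall x, P x -> Q i x) ->
    (forall i, (i < n)%N -> strict_subset (Q i) (Q i.+1)) ->
    (n <= d)%N.

End PoissonDefs.

From HB Require Import structures.
From mathcomp Require Import all_boot all_order all_algebra.
From mathcomp Require Import reals complex ring.
From mathcomp Require Import boolp classical_sets cardinality set_interval finmap.
From mathcomp Require Import measure lebesgue_measure.
Set Implicit Arguments. Unset Strict Implicit. Unset Printing Implicit Defensive.
Import GRing.Theory Num.Theory.
Local Open Scope classical_set_scope.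
Local Open Scope ring_scope.

(* Suppose {a, b} is not in P.  Applying the derivations {b, -} and {a, -} to a
   relation F(a, b) in P of minimal degree shows that a and b are algebraically
   independent modulo P.  The algebra A has countable dimension over the
   uncountable field C, so among the uncountably many ideals P + (b - mu) one
   still meets C[a] only in 0: otherwise relations p_mu(a) = (b - mu) u_mu mod P
   for finitely many linearly dependent u_mu combine, by Lagrange interpolation in
   b, into a nonzero F(a, b) in P.  A prime Q1 above P + (b - mu) avoiding
   C[a] \ 0 exists, and by the same argument some Q1 + (a - lambda) is proper, so
   lies in a prime Q2.  The chain P < Q1 < Q2 contradicts dim A/P <= 1. *)

Section Derivation.
Variables (A : comNzRingType) (D : A -> A).
Hypothesis D_add : {morph D : x y / x + y}.
Hypothesis D_mul : forall x y, D (x * y) = D x * y + x * D y.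

Lemma derivation0 : D 0 = 0.
Proof. by apply: (addrI (D 0)); rewrite -D_add !addr0. Qed.

Lemma derivation_horner_map (T : nzRingType) (g : {rmorphism T -> A})
    (q : {poly T}) x :
  (forall c, D (g c) = 0) ->
  D (map_poly g q).[x] = ((map_poly g q)^`()).[x] * D x.
Proof.
move=> Dg; elim/poly_ind: q => [|q c IH].
  by rewrite rmorph0 horner0 deriv0 horner0 mul0r derivation0.
rewrite rmorphD rmorphM /= map_polyX map_polyC /=.
rewrite hornerMXaddC derivMXaddC D_add D_mul IH Dg addr0 hornerD hornerMX.
ring.
Qed.

End Derivation.

Lemma deriv_neq0 (T : idomainType) (p : {poly T}) :
  (forall n, (n%:R == 0 :> T) = (n == 0)%N) -> (1 < size p)%N -> p^`() != 0.
Proof.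
move=> char0 sp; apply/eqP => /(congr1 (fun q : {poly T} => q`_(size p).-2)).
rewrite coef_deriv coef0 => /eqP; rewrite -mulr_natr mulf_eq0 char0 /=.
have -> : (size p).-2.+1 = (size p).-1 by case: (size p) sp => [|[|n]].
have p0 : p != 0 by rewrite -size_poly_gt0; apply: ltn_trans sp.
by rewrite -lead_coefE lead_coef_eq0 (negbTE p0) /=; case: (size p) sp => [|[|n]].
Qed.

Section Ideals.
Variables (K : comNzRingType) (A : comAlgType K).
Implicit Types (I J S : A -> Prop) (x y z : A).

Lemma idealN I x : ideal I -> I x -> I (- x).
Proof. by case=> _ _ IM Ix; rewrite -mulN1r; apply: IM. Qed.

Lemma idealZ I (c : K) x : ideal I -> I x -> I (c *: x).
Proof. by case=> _ _ IM Ix; rewrite -mulr_algl; apply: IM. Qed.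

Lemma ideal_sum I m (F : 'I_m -> A) :
  ideal I -> (forall k, I (F k)) -> I (\sum_k F k).
Proof. by case=> I0 ID _ IF; apply: big_ind. Qed.

Definition ideal_adjoin I z : A -> Prop := fun r => exists t u, I t /\ r = t + z * u.

Lemma ideal_adjoin_ideal I z : ideal I -> ideal (ideal_adjoin I z).
Proof.
case=> I0 ID IM; split.
- by exists 0, 0; rewrite mulr0 addr0.
- move=> x y [t1 [u1 [It1 ->]]] [t2 [u2 [It2 ->]]]; exists (t1 + t2), (u1 + u2).
  by split; [apply: ID | rewrite mulrDr addrACA].
- move=> x y [t [u [It ->]]]; exists (x * t), (x * u); split; first exact: IM.
  by rewrite mulrDr mulrCA.
Qed.

Lemma ideal_adjoin_sub I z x : I x -> ideal_adjoin I z x.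
Proof. by move=> Ix; exists x, 0; rewrite mulr0 addr0. Qed.

Lemma ideal_adjoin_mem I z : ideal I -> ideal_adjoin I z z.
Proof. by case=> I0 _ _; exists 0, 1; rewrite mulr1 add0r. Qed.

Definition avoiding_ideal I S J :=
  [/\ ideal J, (forall x, I x -> J x) & (forall x, J x -> ~ S x)].

Lemma exists_maximal_avoiding I S : avoiding_ideal I S I ->
  exists M, avoiding_ideal I S M /\ forall J, M `<` J -> ~ avoiding_ideal I S J.
Proof.
move=> avI.
(* The empty chain has union set0, which is no ideal: Zorn is applied to the
   avoiding ideals together with set0. *)
pose Fam : set (set A) := fun J => J = set0 \/ avoiding_ideal I S J.
have inhabited J x : Fam J -> J x -> avoiding_ideal I S J by case=> [->|].
have [M [FM Mmax]] : exists M, Fam M /\ forall J, M `<` J -> ~ Fam J.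
  apply: Zorn_bigcup => F FFam Ftot.
  have [[J0 [x0 [FJ0 J0x0]]]|Fempty] := pselect (exists J x, F J /\ J x); last first.
    left; apply/seteqP; split => x //= [J FJ Jx].
    by apply: Fempty; exists J, x.
  have inF J x : F J -> J x -> avoiding_ideal I S J.
    by move=> FJ; apply: inhabited; apply: FFam.
  have [[I0 _ _] IJ0 _] := inF _ _ FJ0 J0x0.
  right; split; [split|by move=> x Ix; exists J0 => //; apply: IJ0|].
  - by exists J0.
  - move=> x y [J1 FJ1 J1x] [J2 FJ2 J2y].
    case: (Ftot _ _ FJ1 FJ2) => sub.
    + have [[_ ID _] _ _] := inF _ _ FJ2 J2y.
      by exists J2 => //; apply: ID => //; apply: sub.
    + have [[_ ID _] _ _] := inF _ _ FJ1 J1x.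
      by exists J1 => //; apply: ID => //; apply: sub.
  - move=> x y [J FJ Jy]; have [[_ _ IM] _ _] := inF _ _ FJ Jy.
    by exists J => //; apply: IM.
  - by move=> x [J FJ Jx]; have [_ _ JS] := inF _ _ FJ Jx; apply: JS.
case: FM => [M0|avM]; last by exists M; split => // J /Mmax MJ avJ; apply: MJ; right.
exfalso; apply: (Mmax I); last by right.
rewrite M0; split => // /(_ 0) I0; apply: I0; by case: avI => -[].
Qed.

Lemma maximal_avoiding_prime I S M :
  S 1 -> (forall x y, S x -> S y -> S (x * y)) ->
  avoiding_ideal I S M -> (forall J, M `<` J -> ~ avoiding_ideal I S J) ->
  prime_ideal M.
Proof.
move=> S1 SM [idM IM MS] Mmax; split => //; first by move=> M1; exact: MS M1 S1.
move=> x y Mxy; apply: contrapT => /not_orP [Mx My].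
have hit z : ~ M z -> exists t u, M t /\ S (t + z * u).
  move=> Mz; apply: contrapT => noS; apply: (Mmax (ideal_adjoin M z)).
    split; first by move=> w Mw; apply: ideal_adjoin_sub.
    by move=> sub; apply: Mz; apply: sub; apply: ideal_adjoin_mem.
  split; first exact: ideal_adjoin_ideal.
  - by move=> w /IM Mw; apply: ideal_adjoin_sub.
  - by move=> w [t [u [Mt ->]]] Sw; apply: noS; exists t, u.
have [t1 [u1 [Mt1 S1']]] := hit _ Mx.
have [t2 [u2 [Mt2 S2']]] := hit _ My.
apply: (MS _ _ (SM _ _ S1' S2')); case: idM => _ MD MM.
have -> : (t1 + x * u1) * (t2 + y * u2) =
    (t1 * (t2 + y * u2) + t2 * (x * u1)) + (x * y) * (u1 * u2).
  by rewrite mulrDl [x * u1 * _]mulrDr addrA mulrACA [t2 * _]mulrC.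
by apply: (MD); [apply: (MD)|]; rewrite mulrC; apply: (MM).
Qed.

Lemma exists_prime_avoiding I S :
  ideal I -> S 1 -> (forall x y, S x -> S y -> S (x * y)) ->
  (forall x, I x -> ~ S x) ->
  exists Q, [/\ prime_ideal Q, (forall x, I x -> Q x) & (forall x, Q x -> ~ S x)].
Proof.
move=> idI S1 SM IS.
have [M [avM Mmax]] := @exists_maximal_avoiding I S (And3 idI (fun x Ix => Ix) IS).
have prM := maximal_avoiding_prime S1 SM avM Mmax.
by case: avM => _ IM MS; exists M.
Qed.

Lemma exists_prime_above I : ideal I -> ~ I 1 ->
  exists Q, prime_ideal Q /\ forall x, I x -> Q x.
Proof.
move=> idI I1.
have one_mul x y : x = 1 -> y = 1 -> x * y = 1 by move=> -> ->; rewrite mulr1.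
have [|Q [prQ IQ _]] := exists_prime_avoiding idI (erefl 1) one_mul; last by exists Q.
by move=> x Ix x1; apply: I1; rewrite -x1.
Qed.

Lemma strict_subset_adjoin I J z : ideal I -> ~ I z ->
  (forall x, ideal_adjoin I z x -> J x) -> strict_subset I J.
Proof.
move=> idI Iz IzJ; split=> [x Ix|]; first exact/IzJ/ideal_adjoin_sub.
by exists z; split=> //; apply/IzJ/ideal_adjoin_mem.
Qed.

Lemma quot_krull_dim_chain2 (P Q1 Q2 : A -> Prop) d :
  quot_krull_dim_le P d -> prime_ideal P -> prime_ideal Q1 -> prime_ideal Q2 ->
  strict_subset P Q1 -> strict_subset Q1 Q2 -> (2 <= d)%N.
Proof.
move=> Hdim prP prQ1 prQ2 PQ1 Q1Q2.
have [[subPQ1 _] [subQ1Q2 _]] := (PQ1, Q1Q2).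
apply: (Hdim 2%N (nth P [:: P; Q1; Q2])) => [i|i]; rewrite ?ltnS => i_le.
  have : (i \in iota 0 3) by rewrite mem_iota.
  rewrite !inE => /or3P [] /eqP -> /=.
  - by split => // x.
  - by split => // x /subPQ1.
  - by split => // x /subPQ1 /subQ1Q2.
have : (i \in iota 0 2) by rewrite mem_iota.
by rewrite !inE => /orP [] /eqP ->.
Qed.

End Ideals.

Section PoissonBracket.
Variables (K : comNzRingType) (A : comAlgType K) (br : A -> A -> A).
Hypothesis br_poisson : is_poisson_bracket br.

Lemma brDl x y z : br (x + y) z = br x z + br y z.
Proof. by case: br_poisson => brDZl _ _ _ _; have := brDZl 1 x y z; rewrite !scale1r. Qed.

Lemma brDr x y z : br x (y + z) = br x y + br x z.
Proof. by case: br_poisson => _ brDZr _ _ _; have := brDZr 1 x y z; rewrite !scale1r. Qed.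

Lemma brxx x : br x x = 0.
Proof. by case: br_poisson. Qed.

Lemma brMr x y z : br x (y * z) = br x y * z + y * br x z.
Proof. by case: br_poisson. Qed.

Lemma br_skew x y : br x y = - br y x.
Proof.
have := brxx (x + y); rewrite brDl !brDr !brxx add0r addr0 => /eqP.
by rewrite addr_eq0 => /eqP.
Qed.

Lemma br_algr x (k : K) : br x k%:A = 0.
Proof.
have br0 : br x 0 = 0 by apply: (addrI (br x 0)); rewrite -brDr !addr0.
have br1 : br x 1 = 0.
  have := brMr x 1 1; rewrite !mulr1 mul1r => br1E.
  by apply: (addrI (br x 1)); rewrite -br1E addr0.
case: br_poisson => _ brDZr _ _ _.
by have := brDZr k x 1 0; rewrite !addr0 br0 addr0 br1 scaler0.
Qed.

End PoissonBracket.

Section PoissonPrime.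
Variables (K : numFieldType) (A : comAlgType K) (br : A -> A -> A) (P : A -> Prop).
Hypotheses (br_poisson : is_poisson_bracket br) (P_poisson : poisson_prime br P).
Variables a b : A.
Hypothesis br_ab_notin : ~ P (br a b).

Let derivation_horner_alg x (p : {poly K}) :
  br x (horner_alg a p) = horner_alg a p^`() * br x a.
Proof.
rewrite [horner_alg a p]/horner_morph.
rewrite (derivation_horner_map (brDr br_poisson x) (brMr br_poisson x)).
  by rewrite deriv_map.
by move=> c; apply: br_algr.
Qed.

Lemma transcendental_mod (p : {poly K}) : P (horner_alg a p) -> p = 0.
Proof.
have [[idP P1 Pprime] [_ Pbr]] := P_poisson.
have [n] := ubnP (size p); elim: n p => // n IH p sp Pp.
apply/eqP/negPn/negP => p0.
have [s1|s2] := leqP (size p) 1.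
  move: Pp; rewrite (size1_polyC s1) horner_algC => Pc; apply: P1.
  have c0 : p`_0 != 0 by apply: contra p0 => /eqP c0; rewrite (size1_polyC s1) c0.
  by rewrite -(scale1r 1) -(mulVf c0) -scalerA; apply: idealZ.
have : P (br b (horner_alg a p)) by apply: Pbr.
rewrite derivation_horner_alg => /Pprime [|].
  move=> /IH-/(_ (leq_trans (lt_size_deriv p0) sp))/eqP.
  by apply/negP; apply: deriv_neq0 s2 => m; rewrite pnatr_eq0.
by rewrite br_skew // => /(idealN idP); rewrite opprK.
Qed.

Lemma alg_independent_mod (f : {poly {poly K}}) :
  P (map_poly (horner_alg a) f).[b] -> f = 0.
Proof.
have [[idP _ Pprime] [_ Pbr]] := P_poisson.
have [n] := ubnP (size f); elim: n f => // n IH f sf Pf.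
apply/eqP/negPn/negP => f0.
have [s1|s2] := leqP (size f) 1.
  move: Pf; rewrite (size1_polyC s1) map_polyC hornerC => /transcendental_mod c0.
  by move: f0; rewrite (size1_polyC s1) c0 eqxx.
have : P (br a (map_poly (horner_alg a) f).[b]) by apply: Pbr.
rewrite (derivation_horner_map (brDr br_poisson a) (brMr br_poisson a)); last first.
  by move=> c; rewrite derivation_horner_alg brxx // mulr0.
rewrite deriv_map => /Pprime [|//].
move=> /IH-/(_ (leq_trans (lt_size_deriv f0) sf))/eqP; apply/negP.
by apply: deriv_neq0 s2 => m; rewrite -polyC_natr polyC_eq0 pnatr_eq0.
Qed.

End PoissonPrime.

Section NonzeroPolyValues.
Variables (K : idomainType) (A : comAlgType K) (a : A).

Definition nonzero_poly_value (x : A) : Prop :=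
  exists2 p : {poly K}, p != 0 & x = horner_alg a p.

Lemma nonzero_poly_value1 : nonzero_poly_value 1.
Proof. by exists 1; rewrite ?oner_neq0 ?rmorph1. Qed.

Lemma nonzero_poly_valueM x y :
  nonzero_poly_value x -> nonzero_poly_value y -> nonzero_poly_value (x * y).
Proof. by move=> [p p0 ->] [q q0 ->]; exists (p * q); rewrite ?mulf_neq0 ?rmorphM. Qed.

Lemma horner_alg_XsubC (c : K) : horner_alg a ('X - c%:P) = a - c%:A.
Proof. by rewrite rmorphB /= horner_algX horner_algC. Qed.

Lemma horner2_XsubC b (c : K) :
  (map_poly (horner_alg a) ('X - (c%:P)%:P)).[b] = b - c%:A.
Proof. by rewrite rmorphB /= map_polyX map_polyC /= hornerXsubC horner_algC. Qed.

End NonzeroPolyValues.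

Definition lagrange_poly (T : comNzRingType) m (mu s : 'I_m -> T) : {poly T} :=
  \sum_k (s k)%:P * \prod_(l | l != k) ('X - (mu l)%:P).

Lemma lagrange_poly_neq0 (T : idomainType) m (mu s : 'I_m -> T) k0 :
  injective mu -> s k0 != 0 -> lagrange_poly mu s != 0.
Proof.
move=> mu_inj sk0; apply/negP => /eqP /(congr1 (horner^~ (mu k0))).
rewrite /lagrange_poly horner0 horner_sum (bigD1 k0) //= [X in _ + X]big1 ?addr0; last first.
  move=> k kk0; rewrite hornerM horner_prod (bigD1 k0) 1?eq_sym //=.
  by rewrite hornerXsubC subrr mul0r mulr0.
rewrite hornerM hornerC horner_prod => /eqP; rewrite mulf_eq0 (negbTE sk0) /=.
rewrite prodf_seq_eq0 => /hasP [l _] /andP [lk0].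
by rewrite hornerXsubC subr_eq0 => /eqP /mu_inj lE; rewrite lE eqxx in lk0.
Qed.

(* Weighting the k-th relation by prod_(l != k) (z - g (mu l)) and summing
   leaves the multiple (prod_l (z - g (mu l))) * sum_k w k = 0. *)
Lemma lagrange_ideal (K : comNzRingType) (A : comAlgType K) (T : comNzRingType)
    (g : {rmorphism T -> A}) (I : A -> Prop) (z : A) m (mu s : 'I_m -> T)
    (w : 'I_m -> A) :
  ideal I -> (forall k, I (g (s k) - (z - g (mu k)) * w k)) -> \sum_k w k = 0 ->
  I (map_poly g (lagrange_poly mu s)).[z].
Proof.
move=> idI Iw w0.
have evX l : (map_poly g ('X - (mu l)%:P)).[z] = z - g (mu l).
  by rewrite rmorphB /= map_polyX map_polyC hornerXsubC.
have -> : (map_poly g (lagrange_poly mu s)).[z] =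
    \sum_k (g (s k) - (z - g (mu k)) * w k) * \prod_(l | l != k) (z - g (mu l))
    + (\prod_l (z - g (mu l))) * \sum_k w k.
  rewrite /lagrange_poly mulr_sumr -big_split rmorph_sum horner_sum /=.
  apply: eq_bigr => k _.
  rewrite rmorphM rmorph_prod /= map_polyC hornerM hornerC horner_prod.
  rewrite (eq_bigr _ (fun l _ => evX l)) [X in _ = _ + X * _](bigD1 k) //=.
  ring.
rewrite w0 mulr0 addr0; apply: ideal_sum => // k.
by case: idI => _ _ IM; rewrite mulrC; apply: IM.
Qed.

Section CountableSpan.
Variables (K : comNzRingType) (A : comAlgType K) (s : seq A).

Definition word_prod (w : seq nat) : A := \prod_(i <- w) s`_i.

(* An enumeration of all monomials in [s], through the codes of words; numbers
   that code no word give the junk value 0. *)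
Definition monomial (j : nat) : A :=
  if @choice.unpickle (seq nat) j is Some w then word_prod w else 0.

Lemma word_prodE w : word_prod w = monomial (choice.pickle w).
Proof. by rewrite /monomial choice.pickleK. Qed.

Inductive mspan (N : nat) : A -> Prop :=
  | mspan_monomial j : (j < N)%N -> mspan N (monomial j)
  | mspan0 : mspan N 0
  | mspanD x y : mspan N x -> mspan N y -> mspan N (x + y)
  | mspanZ (k : K) x : mspan N x -> mspan N (k *: x).

Lemma mspan_mono N M x : (N <= M)%N -> mspan N x -> mspan M x.
Proof.
move=> NM; elim=> [j jN||x1 y1 _ H1 _ H2|k x1 _ H1].
- by apply: mspan_monomial; apply: leq_trans NM.
- exact: mspan0.
- exact: mspanD.
- exact: mspanZ.
Qed.

Lemma mspan_coord N x : mspan N x -> exists c : 'I_N -> K, x = \sum_j c j *: monomial j.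
Proof.
elim=> [j jN||x1 y1 _ [c1 ->] _ [c2 ->]|k x1 _ [c1 ->]].
- exists (fun i : 'I_N => if nat_of_ord i == j then 1 else 0).
  rewrite (bigD1 (Ordinal jN)) //= eqxx scale1r big1 ?addr0 //.
  by move=> i; rewrite -val_eqE /= => /negbTE ->; rewrite scale0r.
- by exists (fun _ => 0); rewrite big1 // => i _; rewrite scale0r.
- exists (fun i => c1 i + c2 i); rewrite -big_split.
  by apply: eq_bigr => i _; rewrite scalerDl.
- exists (fun i => k * c1 i); rewrite scaler_sumr.
  by apply: eq_bigr => i _; rewrite scalerA.
Qed.

Definition spanned (x : A) : Prop := exists N, mspan N x.

Lemma spannedD x y : spanned x -> spanned y -> spanned (x + y).
Proof.
move=> [N1 H1] [N2 H2]; exists (maxn N1 N2); apply: mspanD.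
  by apply: mspan_mono H1; apply: leq_maxl.
by apply: mspan_mono H2; apply: leq_maxr.
Qed.

Lemma spannedZ k x : spanned x -> spanned (k *: x).
Proof. by move=> [N H]; exists N; apply: mspanZ. Qed.

Lemma spanned0 : spanned 0. Proof. by exists 0%N; apply: mspan0. Qed.

Lemma spanned_word w : spanned (word_prod w).
Proof. by rewrite word_prodE; exists (choice.pickle w).+1; apply: mspan_monomial. Qed.

Lemma spanned_monomialM i j : spanned (monomial i * monomial j).
Proof.
rewrite {1}/monomial; case: (@choice.unpickle (seq nat) i) => [w1|]; last first.
  by rewrite mul0r; apply: spanned0.
rewrite /monomial; case: (@choice.unpickle (seq nat) j) => [w2|]; last first.
  by rewrite mulr0; apply: spanned0.
by rewrite /word_prod -big_cat /= -/(word_prod _); apply: spanned_word.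
Qed.

Lemma spannedM x y : spanned x -> spanned y -> spanned (x * y).
Proof.
move=> [N1 H1] [N2 H2]; elim: H1 => [i _||x1 y1 _ IH1 _ IH2|k x1 _ IH1].
- elim: H2 => [j _||x2 y2 _ IH1 _ IH2|k x2 _ IH1].
  + exact: spanned_monomialM.
  + by rewrite mulr0; apply: spanned0.
  + by rewrite mulrDr; apply: spannedD.
  + by rewrite -scalerAr; apply: spannedZ.
- by rewrite mul0r; apply: spanned0.
- by rewrite mulrDl; apply: spannedD.
- by rewrite -scalerAl; apply: spannedZ.
Qed.

Lemma spanned_all :
  (forall S : A -> Prop, subalgebra S -> (forall x, x \in s -> S x) -> forall a, S a) ->
  forall x, spanned x.
Proof.
move=> s_gen; apply: s_gen.
  split; [|exact: spannedD|exact: spannedM|exact: spannedZ].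
  by have := spanned_word [::]; rewrite /word_prod big_nil.
move=> x xs; rewrite -(nth_index 0 xs).
by have := spanned_word [:: index x s]; rewrite /word_prod big_seq1.
Qed.

End CountableSpan.

Lemma dependent_in_span (K : fieldType) (V : lmodType K) n (g : 'I_n -> V)
    (v : 'I_n.+1 -> V) :
  (forall k, exists c : 'I_n -> K, v k = \sum_j c j *: g j) ->
  exists2 c : 'I_n.+1 -> K, (exists k, c k != 0) & \sum_k c k *: v k = 0.
Proof.
move=> coords; have [M vE] := choice coords.
pose Mx := \matrix_(k < n.+1, j < n) M k j.
have [r kr] : exists r, row r (kermx Mx) != 0.
  apply: contrapT => allz.
  have : (0 < \rank (kermx Mx))%N by rewrite mxrank_ker subn_gt0 ltnS rank_leq_col.
  rewrite lt0n mxrank_eq0 => /eqP; apply; apply/row_matrixP => r; rewrite row0.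
  by apply/eqP; apply: contrapT => kr; apply: allz; exists r; apply/negP.
set c := row r (kermx Mx) in kr.
have cM : c *m Mx = 0 by rewrite /c -row_mul mulmx_ker row0.
exists (fun k => c 0 k).
  apply: contrapT => allz; move/eqP: kr; apply; apply/rowP => k.
  by rewrite [RHS]mxE; apply/eqP; apply: contrapT => ck; apply: allz; exists k; apply/negP.
under eq_bigr => k _ do rewrite vE scaler_sumr.
rewrite exchange_big /=; apply: big1 => j _.
under eq_bigr => k _ do rewrite scalerA.
rewrite -scaler_suml; have -> : \sum_k c 0 k * M k j = (c *m Mx) 0 j.
  by rewrite mxE; apply: eq_bigr => k _; rewrite [Mx k j]mxE.
by rewrite cM mxE scale0r.
Qed.

Lemma realType_uncountable (R : realType) : ~ countable [set: R].
Proof. by move=> /countable_lebesgue_measure0; rewrite -set_itvNyy lebesgue_measure_itv. Qed.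

Lemma complex_uncountable (R : realType) : ~ countable [set: R[i]].
Proof.
move=> /countable_injP [f f_inj]; apply: (@realType_uncountable R).
apply/countable_injP; exists (fun r => f (r%:C)%C) => x y _ _ /f_inj fxy.
by have [] := fxy (in_setT _) (in_setT _).
Qed.

Lemma uncountable_infinite_fiber (T : Type) (f : T -> nat) :
  ~ countable [set: T] -> exists n, infinite_set (f @^-1` [set n]).
Proof.
move=> T_unc; apply: contrapT => allfin; apply: T_unc.
have -> : [set: T] = \bigcup_(n in [set: nat]) f @^-1` [set n].
  by apply/seteqP; split => x // _; exists (f x).
apply: bigcup_countable => // n _; apply: finite_set_countable.
by apply: contrapT => inf; apply: allfin; exists n.
Qed.

(* A has countable dimension while C is uncountable. *)
Lemma exists_linear_relation (R : realType) (A : comAlgType R[i]) (y : R[i] -> A) :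
  finitely_generated A ->
  exists n (mu : 'I_n.+1 -> R[i]) (c : 'I_n.+1 -> R[i]),
    [/\ injective mu, exists k, c k != 0 & \sum_k c k *: y (mu k) = 0].
Proof.
move=> [s /spanned_all spanA]; have [N yN] := choice (fun mu => spanA (y mu)).
have [n infN] := uncountable_infinite_fiber N (@complex_uncountable R).
have [B Bn szB] := infinite_set_fset n.+1 infN.
pose mu (k : 'I_n.+1) := nth 0 (enum_fset B) k.
have lt_sz (k : 'I_n.+1) : (k < size (enum_fset B))%N := leq_trans (ltn_ord k) szB.
have muB k : mu k \in B by apply: mem_nth.
have [|c c0 rel] := @dependent_in_span _ _ n (fun j => monomial s j) (y \o mu).
  by move=> k; apply: mspan_coord; have := yN (mu k); rewrite (Bn (mu k) (muB k)).
exists n, mu, c; split=> // k1 k2 /eqP.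
by rewrite nth_uniq ?fset_uniq // => /eqP/val_inj.
Qed.

Section ShiftIdeals.
Variables (R : realType) (A : comAlgType R[i]).
Hypothesis A_fg : finitely_generated A.

Lemma exists_shift_avoiding (I : A -> Prop) (a b : A) : ideal I ->
  (forall f : {poly {poly R[i]}}, I (map_poly (horner_alg a) f).[b] -> f = 0) ->
  exists mu : R[i], forall x, ideal_adjoin I (b - mu%:A) x -> ~ nonzero_poly_value a x.
Proof.
move=> idI indep; apply: contrapT => meets.
have rel mu : exists pu : {poly R[i]} * A,
    pu.1 != 0 /\ I (horner_alg a pu.1 - (b - mu%:A) * pu.2).
  apply: contrapT => none; apply: meets; exists mu => x [t [u [It ->]]] [p p0 E].
  by apply: none; exists (p, u); split => //=; rewrite -E addrK.
have [pu {}rel] := choice rel.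
have [n [mu [c [mu_inj [k0 ck0] dep]]]] := exists_linear_relation (fun mu => (pu mu).2) A_fg.
pose s k := (c k)%:P * (pu (mu k)).1.
have /indep/eqP : I (map_poly (horner_alg a) (lagrange_poly (fun k => (mu k)%:P) s)).[b].
  apply: (lagrange_ideal (w := fun k => c k *: (pu (mu k)).2)) => // k.
  rewrite /s rmorphM /= !horner_algC mulr_algl -scalerAr -scalerBr.
  by apply: idealZ => //; case: (rel (mu k)).
apply/negP; apply: (lagrange_poly_neq0 (k0 := k0)).
  by move=> l1 l2 /polyC_inj /mu_inj.
by rewrite mulf_neq0 ?polyC_eq0 //; case: (rel (mu k0)).
Qed.

Lemma exists_shift_proper (Q : A -> Prop) (a : A) : ideal Q ->
  (forall x, Q x -> ~ nonzero_poly_value a x) ->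
  exists lam : R[i], ~ ideal_adjoin Q (a - lam%:A) 1.
Proof.
move=> idQ avoid; apply: contrapT => improper.
have rel lam : exists u, Q (1 - (a - lam%:A) * u).
  apply: contrapT => none; apply: improper; exists lam => [[t [u [Qt E]]]].
  by apply: none; exists u; rewrite [X in Q (X - _)]E addrK.
have [u {}rel] := choice rel.
have [n [mu [c [mu_inj [k0 ck0] dep]]]] := exists_linear_relation u A_fg.
have QL : Q (map_poly (in_alg A) (lagrange_poly mu c)).[a].
  apply: (lagrange_ideal (w := fun k => c k *: u (mu k))) => // k /=.
  by rewrite -scalerAr -scalerBr; apply: idealZ.
by apply: (avoid _ QL); exists (lagrange_poly mu c); [apply: lagrange_poly_neq0 ck0|].
Qed.

End ShiftIdeals.

Theorem proposition3p2 (R : realType) (A : comAlgType R[i])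
    (br : A -> A -> A) (P : A -> Prop) (d : nat) :
  is_poisson_bracket br ->
  finitely_generated A ->
  poisson_prime br P ->
  quot_krull_dim_le P d -> (d <= 1)%N ->
  residually_null br P.
Proof.
move=> br_poisson A_fg P_poisson Hdim d_le1 a b; apply: contrapT => br_ab_notin.
have [prP [idP _]] := P_poisson.
have indep := alg_independent_mod br_poisson P_poisson br_ab_notin.
have [mu avoid_mu] := exists_shift_avoiding A_fg idP indep.
have [Q1 [prQ1 PQ1 Q1_avoid]] := exists_prime_avoiding
  (ideal_adjoin_ideal (b - mu%:A) idP) (nonzero_poly_value1 a)
  (@nonzero_poly_valueM _ _ a) avoid_mu.
have [idQ1 _ _] := prQ1.
have [lam proper_lam] := exists_shift_proper A_fg idQ1 Q1_avoid.
have [Q2 [prQ2 Q1Q2]] :=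
  exists_prime_above (ideal_adjoin_ideal (a - lam%:A) idQ1) proper_lam.
suff : (2 <= d)%N by move=> /leq_trans/(_ d_le1).
apply: (quot_krull_dim_chain2 Hdim prP prQ1 prQ2).
- apply: (strict_subset_adjoin idP _ PQ1).
  by rewrite -(horner2_XsubC a) => /indep/eqP; rewrite -size_poly_eq0 size_XsubC.
- apply: (strict_subset_adjoin idQ1 _ Q1Q2) => /Q1_avoid; apply.
  exists ('X - lam%:P); last by rewrite horner_alg_XsubC.
  by rewrite -size_poly_eq0 size_XsubC.
Qed.
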